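(* Let $\mathfrak a_{1.3}$ be the Lie algebra of vector fields on $\mathbb R^3$ with coordinates $(z_1,z_2,w)$ spanned by \[ P^1=\partial_{z_1},\quad D^1=z_1\partial_{z_1}-w\partial_w,\quad K=z_1^2\partial_{z_1}+z_1z_2\partial_{z_2}+\big(z_1w+\tfrac16z_2^{3}\big)\partial_w, \] \[ D^2=z_2\partial_{z_2}+3w\partial_w,\quad P^2=\partial_{z_2},\quad H=z_1\partial_{z_2}+\tfrac12z_2^{2}\partial_w,\quad R(\alpha)=\alpha(z_1)z_2\partial_w,\quad Z(\sigma)=\sigma(z_1)\partial_w, \] where $\alpha$ and $\sigma$ run through the set of smooth functions of $z_1$. Then the radical (the maximal solvable ideal) $\mathfrak r$ of $\mathfrak a_{1.3}$ coincides with $\big\langle D^2,\,P^2,\,H,\,R(\alpha),\,Z(\sigma)\big\rangle$, the span of $D^2$, $P^2$, $H$ and all $R(\alpha)$, $Z(\sigma)$.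
   Context: $\mathfrak a_{1.3}$ is the maximal Lie invariance (pseudo)algebra of the partial differential equation $w_{122}+w_{22}w_{222}=0$ for $w=w(z_1,z_2)$, where subscripts $1,2$ denote differentiation with respect to $z_1,z_2$. The bracket is the Lie bracket of vector fields. *)

From HB Require Import structures.
From mathcomp Require Import all_boot all_order all_algebra.
From mathcomp Require Import all_classical all_reals all_analysis.
Set Implicit Arguments. Unset Strict Implicit. Unset Printing Implicit Defensive.
Import Order.TTheory GRing.Theory Num.Theory.
Local Open Scope ring_scope.
Local Open Scope classical_set_scope.

Section VF.
Variable R : realType.

(* A vector field on R^3 with coordinates (z1,z2,w): component i
   (i = 0 : d/dz1, i = 1 : d/dz2, i = 2 : d/dw) as a function of (z1,z2,w). *)
Definition vf := 'I_3 -> R -> R -> R -> R.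

Definition mkvf (f1 f2 f3 : R -> R -> R -> R) : vf :=
  fun i => if val i == 0%N then f1 else if val i == 1%N then f2 else f3.

Definition vf0 : vf := fun _ _ _ _ => 0.

Definition pd (j : 'I_3) (f : R -> R -> R -> R) (a b c : R) : R :=
  if val j == 0%N then derive1 (fun t => f t b c) a
  else if val j == 1%N then derive1 (fun t => f a t c) b
  else derive1 (fun t => f a b t) c.

Definition lie (X Y : vf) : vf := fun i a b c =>
  \sum_(j < 3) (X j a b c * pd j (Y i) a b c - Y j a b c * pd j (X i) a b c).

Definition smooth (f : R -> R) : Prop :=
  forall (n : nat) (x : R), derivable (derive1n n f) x 1.

Definition span (S : set vf) : set vf :=
  [set X | exists l : seq (R * vf), (forall p, p \in l -> S p.2) /\
     X = (fun i a b c => \sum_(p <- l) p.1 * p.2 i a b c)].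

Definition subspace (I : set vf) : Prop :=
  I vf0 /\ forall (c : R) (X Y : vf), I X -> I Y ->
    I (fun i a b d => c * X i a b d + Y i a b d).

Definition is_ideal (A I : set vf) : Prop :=
  subspace I /\ I `<=` A /\ forall X Y, A X -> I Y -> I (lie X Y).

Fixpoint derived (I : set vf) (k : nat) : set vf :=
  match k with
  | 0%N => I
  | k'.+1 => span [set Z | exists X Y, derived I k' X /\ derived I k' Y /\ Z = lie X Y]
  end.

Definition solvable (I : set vf) : Prop :=
  exists k, derived I k `<=` [set vf0].

Definition P1 : vf := mkvf (fun _ _ _ => 1) (fun _ _ _ => 0) (fun _ _ _ => 0).
Definition D1 : vf := mkvf (fun z1 _ _ => z1) (fun _ _ _ => 0) (fun _ _ w => - w).
Definition Kf : vf := mkvf (fun z1 _ _ => z1 ^+ 2) (fun z1 z2 _ => z1 * z2)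
  (fun z1 z2 w => z1 * w + z2 ^+ 3 / 6).
Definition D2 : vf := mkvf (fun _ _ _ => 0) (fun _ z2 _ => z2) (fun _ _ w => 3 * w).
Definition P2 : vf := mkvf (fun _ _ _ => 0) (fun _ _ _ => 1) (fun _ _ _ => 0).
Definition Hf : vf := mkvf (fun _ _ _ => 0) (fun z1 _ _ => z1) (fun _ z2 _ => z2 ^+ 2 / 2).
Definition Rf (al : R -> R) : vf :=
  mkvf (fun _ _ _ => 0) (fun _ _ _ => 0) (fun z1 z2 _ => al z1 * z2).
Definition Zf (s : R -> R) : vf :=
  mkvf (fun _ _ _ => 0) (fun _ _ _ => 0) (fun z1 _ _ => s z1).

Definition gen_r : set vf :=
  [set X | X = D2 \/ X = P2 \/ X = Hf \/
           (exists al, smooth al /\ X = Rf al) \/ (exists s, smooth s /\ X = Zf s)].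

Definition gen_a : set vf :=
  [set X | X = P1 \/ X = D1 \/ X = Kf \/ gen_r X].

Definition a13 : set vf := span gen_a.
Definition r13 : set vf := span gen_r.

Definition is_radical (A I : set vf) : Prop :=
  is_ideal A I /\ solvable I /\ forall J, is_ideal A J -> solvable J -> J `<=` I.

End VF.

From Pilot Require Import Defs.
From mathcomp Require Import all_boot all_order all_algebra.
From mathcomp Require Import all_classical all_reals all_analysis.
From mathcomp Require Import ring.
Set Implicit Arguments. Unset Strict Implicit. Unset Printing Implicit Defensive.
Import GRing.Theory Num.Theory.
Local Open Scope ring_scope.
Local Open Scope classical_set_scope.

(* Every element of a13 is  a P1 + b D1 + c K + d D2 + u P2 + v H + R(al) + Z(s).  Its
   d/dz1-component a + b z1 + c z1^2 depends on z1 only, and X |-> (a, b, c) is a Lie algebra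
   morphism onto sl2 = <d/dz, z d/dz, z^2 d/dz> with kernel r13.  The explicit bracket of a
   general element with an element of r13 shows that r13 is an ideal with derived series
   r13 > <P2, H, R, Z> > <R, Z> > 0.  Conversely, if an ideal J has an element with
   (a, b, c) <> 0, bracketing it with P1 and K puts lifts of the standard basis of sl2 into J;
   as sl2 is perfect, such lifts lie in every derived ideal of J, so J is not solvable. *)

Section Smooth.
Variable R : realType.
Implicit Types (f g : R -> R) (k x : R).

Lemma derive1_add f g x : derivable f x 1 -> derivable g x 1 ->
  derive1 (fun t => f t + g t) x = derive1 f x + derive1 g x.
Proof.
move=> df dg; rewrite derive1E (_ : (fun t => f t + g t) = f + g) //.
by rewrite (deriveD df dg) -!derive1E.
Qed.

Lemma derive1_mulX f x : derivable f x 1 ->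
  derive1 (fun t => t * f t) x = f x + x * derive1 f x.
Proof.
move=> df; rewrite derive1E (_ : (fun t => t * f t) = id * f) //.
rewrite (deriveM (@derivable_id _ R^o x 1) df) derive_id -derive1E.
by rewrite /GRing.scale /= mulr1 addrC.
Qed.

Lemma derive1_cubic (g h1 h2 : R -> R) (A B C D E x : R) :
  derivable h1 x 1 -> derivable h2 x 1 ->
  (forall t, g t = A + B * t + C * t ^+ 2 + D * t ^+ 3 + E * h1 t + h2 t) ->
  derive1 g x = B + 2 * C * x + 3 * D * x ^+ 2 + E * derive1 h1 x + derive1 h2 x.
Proof.
move=> dh1 dh2 gE.
pose p : {poly R} := A%:P + B *: 'X + C *: 'X ^+ 2 + D *: 'X ^+ 3.
have pE t : p.[t] = A + B * t + C * t ^+ 2 + D * t ^+ 3.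
  by rewrite /p !(hornerD, hornerZ, hornerXn, hornerX, hornerC).
have dh : derivable (fun t => E * h1 t + h2 t) x 1.
  exact: derivableD (derivableM (derivable_cst E x 1) dh1) dh2.
have -> : g = (fun t => p.[t] + (E * h1 t + h2 t)).
  by apply/funext => t; rewrite gE pE; ring.
rewrite (derive1_add (@derivable_horner _ p x) dh) (derive1_add _ dh2) ?derive1Ml //;
  last exact: derivableM (derivable_cst E x 1) dh1.
rewrite -derivE /p !(derivD, derivZ, derivXn, derivX, derivC).
rewrite !(hornerD, hornerZ, hornerXn, hornerX, hornerC, hornerMn) /=; ring.
Qed.

Lemma derive1_cubic_poly (g : R -> R) (A B C D x : R) :
  (forall t, g t = A + B * t + C * t ^+ 2 + D * t ^+ 3) ->
  derive1 g x = B + 2 * C * x + 3 * D * x ^+ 2.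
Proof.
move=> gE; have d0 := derivable_cst (0 : R) x 1.
rewrite (@derive1_cubic g (cst 0) (cst 0) A B C D 0 x d0 d0) ?derive1_cst.
  by ring.
by move=> t; rewrite gE /=; ring.
Qed.

Lemma smooth_derive1 f : smooth f -> smooth (derive1 f).
Proof. by move=> sf n x; rewrite -derive1Sn; apply: sf. Qed.

Lemma smooth_cst k : smooth (fun _ => k).
Proof.
have dE n : derive1n n (fun _ => k) = fun _ => if n is 0%N then k else 0.
  elim: n => [|n IH] //; rewrite derive1nS IH; apply/funext => x.
  by rewrite (_ : (fun _ => _) = cst (if n is 0%N then k else 0)) ?derive1_cst.
by move=> n x; rewrite dE; exact: derivable_cst.
Qed.

Lemma smooth_add f g : smooth f -> smooth g -> smooth (fun t => f t + g t).
Proof.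
move=> sf sg.
have dE n : derive1n n (fun t => f t + g t) = fun t => derive1n n f t + derive1n n g t.
  elim: n => [|n IH] //; rewrite derive1nS IH; apply/funext => x.
  exact: derive1_add (sf n x) (sg n x).
by move=> n x; rewrite dE; exact: derivableD (sf n x) (sg n x).
Qed.

Lemma smooth_scale k f : smooth f -> smooth (fun t => k * f t).
Proof.
move=> sf.
have dE n : derive1n n (fun t => k * f t) = fun t => k * derive1n n f t.
  elim: n => [|n IH] //; rewrite derive1nS IH; apply/funext => x.
  exact: derive1Ml (sf n x).
by move=> n x; rewrite dE; exact: derivableM (derivable_cst k x 1) (sf n x).
Qed.

Lemma smooth_mulX f : smooth f -> smooth (fun t => t * f t).
Proof.
move=> sf.
have dE n : derive1n n (fun t => t * f t) =
    fun t => t * derive1n n f t + n%:R * derive1n n.-1 f t.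
  elim: n => [|n IH]; first by apply/funext => x /=; rewrite mul0r addr0.
  rewrite derive1nS IH; apply/funext => x.
  have dX := derivableM (@derivable_id _ R^o x 1) (sf n x).
  rewrite derive1_add ?derive1_mulX ?derive1Ml //; last first.
    exact: derivableM (derivable_cst _ x 1) (sf n.-1 x).
  rewrite -derive1nS; case: n {IH dX} => [|n] /=; first by rewrite !mul0r; ring.
  by rewrite mulrS -derive1nS; ring.
move=> n x; rewrite dE.
apply: derivableD; last exact: derivableM (derivable_cst _ x 1) (sf n.-1 x).
exact: derivableM (@derivable_id _ R^o x 1) (sf n x).
Qed.

Lemma smooth_opp f : smooth f -> smooth (fun t => - f t).
Proof.
move=> sf; rewrite (_ : (fun t => - f t) = fun t => -1 * f t); first exact: smooth_scale.
by apply/funext => t; rewrite mulN1r.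
Qed.

End Smooth.

Local Notation iz1 := (@Ordinal 3 0 isT).
Local Notation iz2 := (@Ordinal 3 1 isT).
Local Notation iw := (@Ordinal 3 2 isT).

Ltac smooth_tac := repeat match goal with
  | H : smooth ?f |- smooth ?f => exact: H
  | H : smooth ?f |- smooth (fun t => ?f t) => exact: H
  | |- smooth (fun _ => ?k) => exact: smooth_cst
  | |- smooth (fun t => @?f t + @?g t) => apply: (@smooth_add _ f g)
  | |- smooth (fun t => - @?f t) => apply: (@smooth_opp _ f)
  | |- smooth (fun t => ?k * @?f t) => apply: (@smooth_scale _ k f)
  | |- smooth (fun t => t * @?f t) => apply: (@smooth_mulX _ f)
  | |- smooth (fun t => derive1 ?f t) => apply: (@smooth_derive1 _ f)
  end.

Section A13.
Variable R : realType.
Implicit Types (S C J : set (vf R)) (X Y : vf R).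

Lemma ord3P (i : 'I_3) : [\/ i = iz1, i = iz2 | i = iw].
Proof. by case: i => -[|[|[|//]]] ?; [apply: Or31|apply: Or32|apply: Or33]; apply: val_inj. Qed.

Lemma sum_ord3 (F : 'I_3 -> R) : \sum_(j < 3) F j = F iz1 + F iz2 + F iw.
Proof.
by rewrite !big_ord_recl big_ord0 addr0 addrA; congr (F _ + F _ + F _); apply: val_inj.
Qed.

(* a P1 + b D1 + c K + d D2 + u P2 + v H + R(al) + Z(s) *)
Definition comb (a b c d u v : R) (al s : R -> R) : vf R :=
  mkvf (fun x _ _ => a + b * x + c * x ^+ 2) (fun x y _ => c * x * y + d * y + u + v * x)
    (fun x y w => (c * x - b + 3 * d) * w + c * y ^+ 3 / 6 + v * y ^+ 2 / 2 + al x * y + s x).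

Section PartialDerivatives.
Variables (a b c d u v : R) (al s : R -> R) (x y w : R).
Local Notation X := (comb a b c d u v al s).
Ltac unfold_pd := rewrite /pd /comb /mkvf /=.
Tactic Notation "pd_cubic" uconstr(A) uconstr(B) uconstr(C) uconstr(D) :=
  unfold_pd; rewrite (@derive1_cubic_poly _ _ A B C D) => [|t]; ring.

Lemma comb1_d1 : pd iz1 (X iz1) x y w = b + 2 * c * x.
Proof. by pd_cubic a b c 0. Qed.

Lemma comb1_d2 : pd iz2 (X iz1) x y w = 0.
Proof. by pd_cubic (a + b * x + c * x ^+ 2) 0 0 0. Qed.

Lemma comb1_dw : pd iw (X iz1) x y w = 0.
Proof. by pd_cubic (a + b * x + c * x ^+ 2) 0 0 0. Qed.

Lemma comb2_d1 : pd iz1 (X iz2) x y w = c * y + v.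
Proof. by pd_cubic (d * y + u) (c * y + v) 0 0. Qed.

Lemma comb2_d2 : pd iz2 (X iz2) x y w = c * x + d.
Proof. by pd_cubic (u + v * x) (c * x + d) 0 0. Qed.

Lemma comb2_dw : pd iw (X iz2) x y w = 0.
Proof. by pd_cubic (c * x * y + d * y + u + v * x) 0 0 0. Qed.

Lemma combw_d1 : derivable al x 1 -> derivable s x 1 ->
  pd iz1 (X iw) x y w = c * w + derive1 al x * y + derive1 s x.
Proof.
move=> dal ds; unfold_pd.
by rewrite (@derive1_cubic _ _ _ _ ((- b + 3 * d) * w + c * y ^+ 3 / 6 + v * y ^+ 2 / 2)
  (c * w) 0 0 y x dal ds) => [|t]; ring.
Qed.

Lemma combw_d2 : pd iz2 (X iw) x y w = c * y ^+ 2 / 2 + v * y + al x.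
Proof.
unfold_pd; rewrite (@derive1_cubic_poly _ _ ((c * x - b + 3 * d) * w + s x) (al x)
  (v / 2) (c / 6)) => [|t]; last by ring.
by field; rewrite ?pnatr_eq0.
Qed.

Lemma combw_dw : pd iw (X iw) x y w = c * x - b + 3 * d.
Proof.
by pd_cubic (c * y ^+ 3 / 6 + v * y ^+ 2 / 2 + al x * y + s x) (c * x - b + 3 * d) 0 0.
Qed.

End PartialDerivatives.

Definition lie_comb_R (a b c d u v d' u' v' : R) (al be : R -> R) : R -> R := fun t =>
  a * derive1 be t + b * (t * derive1 be t) + c * (t * (t * derive1 be t))
  + (b - 2 * d) * be t + 2 * d' * al t + (u * v' - u' * v).

Definition lie_comb_Z (a b c d u v d' u' v' : R) (al s be ta : R -> R) : R -> R := fun t =>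
  a * derive1 ta t + b * (t * derive1 ta t) + c * (t * (t * derive1 ta t))
  + u * be t + v * (t * be t) + 3 * d' * s t - u' * al t - v' * (t * al t)
  - c * (t * ta t) + (b - 3 * d) * ta t.

Lemma lie_comb a b c d u v d' u' v' al s be ta :
  smooth al -> smooth s -> smooth be -> smooth ta ->
  lie (comb a b c d u v al s) (comb 0 0 0 d' u' v' be ta) =
  comb 0 0 0 0 (a * v' + u * d' - d * u') (b * v' + v * d' - c * u' - d * v')
    (lie_comb_R a b c d u v d' u' v' al be) (lie_comb_Z a b c d u v d' u' v' al s be ta).
Proof.
move=> sal ss sbe sta.
apply/funext => i; apply/funext => x; apply/funext => y; apply/funext => w.
have dal := sal 0%N x; have ds := ss 0%N x; have dbe := sbe 0%N x; have dta := sta 0%N x.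
case: (ord3P i) => ->; rewrite /lie sum_ord3.
- rewrite !(comb1_d1, comb1_d2, comb1_dw) /comb /mkvf /=; ring.
- rewrite !(comb2_d1, comb2_d2, comb2_dw) /comb /mkvf /=; ring.
- rewrite !(combw_d1, combw_d2, combw_dw) // /lie_comb_R /lie_comb_Z /comb /mkvf /=.
  by field; rewrite ?pnatr_eq0.
Qed.

Ltac vf_funext := do 4 apply/funext => ?.

Ltac vf_ext := let i := fresh "i" in
  apply/funext => i; do 3 apply/funext => ?; case: (ord3P i) => ->;
  unfold P1, D1, Kf, D2, P2, Hf, Rf, Zf, comb, mkvf, vf0; simpl.

Lemma subset_span S : S `<=` Defs.span S.
Proof.
move=> X SX; exists [:: (1, X)]; split; first by move=> p; rewrite inE => /eqP ->.
by vf_funext; rewrite big_seq1 mul1r.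
Qed.

Lemma span_mono S C : S `<=` C -> Defs.span S `<=` Defs.span C.
Proof. by move=> SC X [l [Sl ->]]; exists l; split => // p /Sl /SC. Qed.

Lemma span_sub S C : Defs.subspace C -> S `<=` C -> Defs.span S `<=` C.
Proof.
move=> [C0 Clin] SC X; case=> l [Sl ->]; elim: l Sl => [|p l IH] Sl.
  rewrite (_ : (fun _ _ _ _ => _) = @vf0 R) //.
  by vf_funext; rewrite big_nil.
rewrite (_ : (fun _ _ _ _ => _) = fun i a b c =>
    p.1 * p.2 i a b c + (fun i a b c => \sum_(q <- l) q.1 * q.2 i a b c) i a b c).
  apply: Clin; first by apply/SC/Sl; rewrite inE eqxx.
  by apply: IH => q lq; apply: Sl; rewrite inE lq orbT.
by vf_funext; rewrite big_cons.
Qed.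

Lemma comb0 : comb 0 0 0 0 0 0 (fun _ => 0) (fun _ => 0) = @vf0 R.
Proof. by vf_ext; ring. Qed.

Lemma comb_lin k a b c d u v al s a' b' c' d' u' v' al' s' :
  (fun i x y w => k * comb a b c d u v al s i x y w + comb a' b' c' d' u' v' al' s' i x y w) =
  comb (k * a + a') (k * b + b') (k * c + c') (k * d + d') (k * u + u') (k * v + v')
    (fun t => k * al t + al' t) (fun t => k * s t + s' t) :> vf R.
Proof. by vf_ext; ring. Qed.

Definition a13_forms : set (vf R) := [set X | exists a b c d u v al s,
  [/\ smooth al, smooth s & X = comb a b c d u v al s]].
Definition r13_forms : set (vf R) := [set X | exists d u v al s,
  [/\ smooth al, smooth s & X = comb 0 0 0 d u v al s]].
Definition r13_forms1 : set (vf R) := [set X | exists u v al s,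
  [/\ smooth al, smooth s & X = comb 0 0 0 0 u v al s]].
Definition r13_forms2 : set (vf R) := [set X | exists al s,
  [/\ smooth al, smooth s & X = comb 0 0 0 0 0 0 al s]].

Lemma subspace_a13_forms : Defs.subspace a13_forms.
Proof.
split; first by exists 0, 0, 0, 0, 0, 0, (fun _ => 0), (fun _ => 0); rewrite comb0; split => //;
  smooth_tac.
move=> k _ _ [a [b [c [d [u [v [al [s [sal ss ->]]]]]]]]]
  [a' [b' [c' [d' [u' [v' [al' [s' [sal' ss' ->]]]]]]]]].
by rewrite comb_lin; do 8 eexists; split; last reflexivity; smooth_tac.
Qed.

Lemma subspace_r13_forms : Defs.subspace r13_forms.
Proof.
split; first by exists 0, 0, 0, (fun _ => 0), (fun _ => 0); rewrite comb0; split => //; smooth_tac.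
move=> k _ _ [d [u [v [al [s [sal ss ->]]]]]] [d' [u' [v' [al' [s' [sal' ss' ->]]]]]].
by rewrite comb_lin !mulr0 !addr0; do 5 eexists; split; last reflexivity; smooth_tac.
Qed.

Lemma subspace_r13_forms1 : Defs.subspace r13_forms1.
Proof.
split; first by exists 0, 0, (fun _ => 0), (fun _ => 0); rewrite comb0; split => //; smooth_tac.
move=> k _ _ [u [v [al [s [sal ss ->]]]]] [u' [v' [al' [s' [sal' ss' ->]]]]].
by rewrite comb_lin !mulr0 !addr0; do 4 eexists; split; last reflexivity; smooth_tac.
Qed.

Lemma subspace_r13_forms2 : Defs.subspace r13_forms2.
Proof.
split; first by exists (fun _ => 0), (fun _ => 0); rewrite comb0; split => //; smooth_tac.
move=> k _ _ [al [s [sal ss ->]]] [al' [s' [sal' ss' ->]]].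
by rewrite comb_lin !mulr0 !addr0; do 2 eexists; split; last reflexivity; smooth_tac.
Qed.

Lemma subspace_vf0 : Defs.subspace [set @vf0 R].
Proof.
split => // k _ _ -> ->.
by vf_funext; rewrite /vf0 mulr0 addr0.
Qed.

Lemma gen_a_sub_forms : @gen_a R `<=` a13_forms.
Proof.
have s0 := @smooth_cst R 0.
move=> X [->|[->|[->|[->|[->|[->|[[al [sal ->]]|[s [ss ->]]]]]]]]].
- by exists 1, 0, 0, 0, 0, 0, (fun _ => 0), (fun _ => 0); split => //; vf_ext; ring.
- by exists 0, 1, 0, 0, 0, 0, (fun _ => 0), (fun _ => 0); split => //; vf_ext; ring.
- by exists 0, 0, 1, 0, 0, 0, (fun _ => 0), (fun _ => 0); split => //; vf_ext; ring.
- by exists 0, 0, 0, 1, 0, 0, (fun _ => 0), (fun _ => 0); split => //; vf_ext; ring.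
- by exists 0, 0, 0, 0, 1, 0, (fun _ => 0), (fun _ => 0); split => //; vf_ext; ring.
- by exists 0, 0, 0, 0, 0, 1, (fun _ => 0), (fun _ => 0); split => //; vf_ext; ring.
- by exists 0, 0, 0, 0, 0, 0, al, (fun _ => 0); split => //; vf_ext; ring.
- by exists 0, 0, 0, 0, 0, 0, (fun _ => 0), s; split => //; vf_ext; ring.
Qed.

Lemma gen_r_sub_forms : @gen_r R `<=` r13_forms.
Proof.
have s0 := @smooth_cst R 0.
move=> X [->|[->|[->|[[al [sal ->]]|[s [ss ->]]]]]].
- by exists 1, 0, 0, (fun _ => 0), (fun _ => 0); split => //; vf_ext; ring.
- by exists 0, 1, 0, (fun _ => 0), (fun _ => 0); split => //; vf_ext; ring.
- by exists 0, 0, 1, (fun _ => 0), (fun _ => 0); split => //; vf_ext; ring.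
- by exists 0, 0, 0, al, (fun _ => 0); split => //; vf_ext; ring.
- by exists 0, 0, 0, (fun _ => 0), s; split => //; vf_ext; ring.
Qed.

Lemma a13_sub_forms : @a13 R `<=` a13_forms.
Proof. by rewrite /a13; exact: span_sub subspace_a13_forms gen_a_sub_forms. Qed.

Lemma r13E : @r13 R = r13_forms.
Proof.
apply/seteqP; split.
  by rewrite /r13; exact: span_sub subspace_r13_forms gen_r_sub_forms.
move=> _ [d [u [v [al [s [sal ss ->]]]]]].
exists [:: (d, @D2 R); (u, @P2 R); (v, @Hf R); (1, Rf al); (1, Zf s)]; split.
  move=> p; rewrite !inE => /orP[/eqP->|/orP[/eqP->|/orP[/eqP->|/orP[/eqP->|/eqP->]]]].
  - by left.
  - by right; left.
  - by right; right; left.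
  - by right; right; right; left; exists al.
  - by right; right; right; right; exists s.
by vf_ext; rewrite !big_cons big_nil /=; ring.
Qed.

Lemma lie_a13_r13_forms1 X Y : a13_forms X -> r13_forms Y -> r13_forms1 (lie X Y).
Proof.
move=> [a [b [c [d [u [v [al [s [sal ss ->]]]]]]]]] [d' [u' [v' [be [ta [sbe sta ->]]]]]].
rewrite lie_comb //; do 4 eexists; split; last reflexivity;
  rewrite /lie_comb_R /lie_comb_Z; smooth_tac.
Qed.

Lemma r13_forms1_sub : r13_forms1 `<=` r13_forms.
Proof. by move=> _ [u [v [al [s [sal ss ->]]]]]; exists 0, u, v, al, s. Qed.

Lemma r13_forms_sub : r13_forms `<=` a13_forms.
Proof. by move=> _ [d [u [v [al [s [sal ss ->]]]]]]; exists 0, 0, 0, d, u, v, al, s. Qed.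

Lemma r13_ideal : is_ideal (@a13 R) (@r13 R).
Proof.
split; first by rewrite r13E; exact: subspace_r13_forms.
split; first by apply: span_mono => X rX; right; right; right.
move=> X Y /a13_sub_forms aX; rewrite r13E => rY.
exact/r13_forms1_sub/lie_a13_r13_forms1.
Qed.

Lemma derived1_r13 : derived (@r13 R) 1 `<=` r13_forms1.
Proof.
apply: span_sub subspace_r13_forms1 _ => Z [X [Y [rX [rY ->]]]].
rewrite r13E in rX rY.
exact: lie_a13_r13_forms1 (r13_forms_sub rX) rY.
Qed.

Lemma derived2_r13 : derived (@r13 R) 2 `<=` r13_forms2.
Proof.
apply: span_sub subspace_r13_forms2 _ => Z [X [Y [/derived1_r13 rX [/derived1_r13 rY ->]]]].
move: rX rY => [u [v [al [s [sal ss ->]]]]] [u' [v' [be [ta [sbe sta ->]]]]].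
rewrite lie_comb //; do 2 eexists; split; first last.
- by congr comb; ring.
- rewrite /lie_comb_Z; smooth_tac.
- rewrite /lie_comb_R; smooth_tac.
Qed.

Lemma derived3_r13 : derived (@r13 R) 3 `<=` [set @vf0 R].
Proof.
apply: span_sub subspace_vf0 _ => Z [X [Y [/derived2_r13 rX [/derived2_r13 rY ->]]]].
move: rX rY => [al [s [sal ss ->]]] [be [ta [sbe sta ->]]].
rewrite lie_comb // -comb0 /lie_comb_R /lie_comb_Z; congr comb; try ring;
  by apply/funext => t; ring.
Qed.

Lemma r13_solvable : Defs.solvable (@r13 R).
Proof. by exists 3%N; exact: derived3_r13. Qed.

Definition sl2_part (p q r : R) X := forall x y w, X iz1 x y w = p + q * x + r * x ^+ 2.

(* written as [k X + 0] so that it is literally a combination allowed by [subspace] *)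
Definition vscale (k : R) X : vf R := fun i a b c => k * X i a b c + vf0 i a b c.

Lemma lie_z1_line (f g : R -> R) X Y :
  (forall x y w, X iz1 x y w = f x) -> (forall x y w, Y iz1 x y w = g x) ->
  forall x y w, lie X Y iz1 x y w = f x * derive1 g x - g x * derive1 f x.
Proof.
move=> Xf Yg x y w; rewrite /lie sum_ord3 /pd /=.
have line (Z : vf R) (h : R -> R) : (forall x y w, Z iz1 x y w = h x) ->
    [/\ (fun t => Z iz1 t y w) = h, (fun t => Z iz1 x t w) = cst (h x)
       & (fun t => Z iz1 x y t) = cst (h x)].
  by move=> Zh; split; apply/funext => t; rewrite Zh.
have [-> -> ->] := line _ _ Xf; have [-> -> ->] := line _ _ Yg.
by rewrite !derive1_cst Xf Yg; ring.
Qed.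

Lemma sl2_part_lie p q r p' q' r' X Y : sl2_part p q r X -> sl2_part p' q' r' Y ->
  sl2_part (p * q' - p' * q) (2 * (p * r' - p' * r)) (q * r' - q' * r) (lie X Y).
Proof.
move=> HX HY x y w.
have d1 (a b c : R) : derive1 (fun t : R => a + b * t + c * t ^+ 2) x = b + 2 * c * x.
  by rewrite (@derive1_cubic_poly _ _ a b c 0) => [|t]; ring.
by rewrite (lie_z1_line HX HY) !d1; ring.
Qed.

Lemma sl2_part_scale k p q r p1 q1 r1 X : sl2_part p q r X ->
  p1 = k * p -> q1 = k * q -> r1 = k * r -> sl2_part p1 q1 r1 (vscale k X).
Proof. by move=> HX -> -> -> x y w; rewrite /vscale HX /vf0; ring. Qed.

Lemma sl2_part_scale_lie k p q r p' q' r' p1 q1 r1 X Y :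
  sl2_part p q r X -> sl2_part p' q' r' Y ->
  p1 = k * (p * q' - p' * q) -> q1 = k * (2 * (p * r' - p' * r)) -> r1 = k * (q * r' - q' * r) ->
  sl2_part p1 q1 r1 (vscale k (lie X Y)).
Proof. by move=> HX HY; apply: sl2_part_scale (sl2_part_lie HX HY). Qed.

Definition sl2_basis_in J := exists Y0 Y1 Y2, [/\ J Y0, J Y1 & J Y2] /\
  [/\ sl2_part 1 0 0 Y0, sl2_part 0 1 0 Y1 & sl2_part 0 0 1 Y2].

Lemma derived_vscale_lie J n k X Y :
  derived J n X -> derived J n Y -> derived J n.+1 (vscale k (lie X Y)).
Proof.
move=> JX JY; exists [:: (k, lie X Y)]; split.
  by move=> p; rewrite inE => /eqP ->; exists X, Y.
by vf_funext; rewrite big_seq1 /vscale /vf0 addr0.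
Qed.

(* For e0, e1, e2 with sl2 parts (1,0,0), (0,1,0), (0,0,1):
   [e0, e1] = e0, [e0, e2] = 2 e1 and [e1, e2] = e2. *)
Lemma derived_sl2_basis J n : sl2_basis_in J -> sl2_basis_in (derived J n).
Proof.
move=> J3; elim: n => [//|n [Y0 [Y1 [Y2 [[J0 J1 J2] [H0 H1 H2]]]]]].
exists (vscale 1 (lie Y0 Y1)), (vscale 2^-1 (lie Y0 Y2)), (vscale 1 (lie Y1 Y2)).
split; first by split; apply: derived_vscale_lie.
split; [apply: (sl2_part_scale_lie H0 H1)|apply: (sl2_part_scale_lie H0 H2)
  |apply: (sl2_part_scale_lie H1 H2)]; by field; rewrite ?pnatr_eq0.
Qed.

Lemma sl2_basis_not_solvable J : sl2_basis_in J -> ~ Defs.solvable J.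
Proof.
move=> J3 [k Jk]; have [Y0 [_ [_ [[J0 _ _] [H0 _ _]]]]] := derived_sl2_basis k J3.
have := H0 0 0 0; rewrite (Jk _ J0) /vf0 !mul0r !addr0 => /esym/eqP.
by rewrite oner_eq0.
Qed.

Lemma P1_sl2_part : sl2_part 1 0 0 (@P1 R).
Proof. by move=> x y w; rewrite /P1 /mkvf /=; ring. Qed.

Lemma Kf_sl2_part : sl2_part 0 0 1 (@Kf R).
Proof. by move=> x y w; rewrite /Kf /mkvf /=; ring. Qed.

Section SolvableIdeal.
Variable J : set (vf R).
Hypothesis J_ideal : is_ideal (@a13 R) J.

Lemma ideal_vscale k X : J X -> J (vscale k X).
Proof. by case: J_ideal => -[J0 Jlin] _ JX; apply: Jlin. Qed.

Lemma ideal_vscale_lie k X Y : @a13 R X -> J Y -> J (vscale k (lie X Y)).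
Proof. by move=> aX JY; apply/ideal_vscale/J_ideal.2.2. Qed.

Lemma ideal_sl2_e0 X a b c : J X -> sl2_part a b c X -> [|| a != 0, b != 0 | c != 0] ->
  exists W, J W /\ sl2_part 1 0 0 W.
Proof.
move=> JX HX abc.
have aP1 : @a13 R (@P1 R) := @subset_span (@gen_a R) _ (or_introl erefl).
have J1 : J (lie (@P1 R) X) := J_ideal.2.2 _ _ aP1 JX.
(* [P1, X] has sl2 part (b, 2c, 0), the derivative of a + b z + c z^2 *)
have H1 := sl2_part_lie P1_sl2_part HX.
have [c0|cn0] := eqVneq c 0; last first.
  exists (vscale (2 * c)^-1 (lie (@P1 R) (lie (@P1 R) X))).
  split; first exact: ideal_vscale_lie.
  by apply: (sl2_part_scale_lie P1_sl2_part H1); field; rewrite ?pnatr_eq0 ?cn0.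
have [b0|bn0] := eqVneq b 0; last first.
  exists (vscale b^-1 (lie (@P1 R) X)); split; first exact: ideal_vscale.
  by apply: (sl2_part_scale H1); rewrite ?c0; field.
move: abc; rewrite b0 c0 !eqxx /= !orbF => an0.
exists (vscale a^-1 X); split; first exact: ideal_vscale.
by apply: (sl2_part_scale HX); rewrite ?b0 ?c0; field.
Qed.

Lemma ideal_sl2_basis X a b c : J X -> sl2_part a b c X -> [|| a != 0, b != 0 | c != 0] ->
  sl2_basis_in J.
Proof.
move=> JX HX abc; have [W [JW HW]] := ideal_sl2_e0 JX HX abc.
have aK : @a13 R (@Kf R).
  exact: @subset_span (@gen_a R) _ (or_intror (or_intror (or_introl erefl))).
(* [K, e0] = -2 e1 and [K, e1] = - e2 *)
pose W1 := vscale (- 2^-1) (lie (@Kf R) W).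
have HW1 : sl2_part 0 1 0 W1.
  by apply: (sl2_part_scale_lie Kf_sl2_part HW); field; rewrite ?pnatr_eq0.
have JW1 : J W1 := ideal_vscale_lie _ aK JW.
exists W, W1, (vscale (-1) (lie (@Kf R) W1)).
split; first by split => //; exact: ideal_vscale_lie _ aK JW1.
by split => //; apply: (sl2_part_scale_lie Kf_sl2_part HW1); ring.
Qed.

End SolvableIdeal.

Lemma solvable_ideal_sub_r13 J : is_ideal (@a13 R) J -> Defs.solvable J -> J `<=` @r13 R.
Proof.
move=> J_ideal J_solv X JX; rewrite r13E.
have [a [b [c [d [u [v [al [s [sal ss EX]]]]]]]]] := a13_sub_forms (J_ideal.2.1 _ JX).
have [abc|] := boolP [|| a != 0, b != 0 | c != 0].
  have HX : sl2_part a b c X by rewrite EX.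
  by case: (sl2_basis_not_solvable (ideal_sl2_basis J_ideal JX HX abc) J_solv).
rewrite !negb_or !negbK => /and3P[/eqP a0 /eqP b0 /eqP c0].
by exists d, u, v, al, s; rewrite EX a0 b0 c0.
Qed.

End A13.

Theorem lemma1 (R : realType) : is_radical (@a13 R) (@r13 R).
Proof.
split; first exact: r13_ideal.
by split; [exact: r13_solvable | exact: solvable_ideal_sub_r13].
Qed.
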